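(* Let $\mathcal{C}_1,\dots,\mathcal{C}_D\subseteq\mathbb{F}_q^n$ be linear codes and $M\subseteq[n]^D$. Then $M$ is inner-generated for the code $\mathcal{C}_1\boxplus\cdots\boxplus\mathcal{C}_D$ if and only if $M$ is extendable in $\mathcal{C}_1^\perp\otimes\cdots\otimes\mathcal{C}_D^\perp$.
   Context: For $n,D\in\mathbb{N}$ and $i\in[D]$, $\mathcal{L}_i$ is the set of lines in $[n]^D$ parallel to the $i$-th axis (sets $A_1\times\cdots\times A_D$ with $A_i=[n]$, $|A_j|=1$ for $j\ne i$), and $\mathcal{L}=\bigcup_i\mathcal{L}_i$; a line in $\mathcal{L}_i$ is identified with $[n]$ via the $i$-th coordinate. For codes $\mathcal{B}_1,\dots,\mathcal{B}_D\subseteq\mathbb{F}_q^n$, the product code is $\mathcal{B}_1\otimes\cdots\otimes\mathcal{B}_D=\{c\in\mathbb{F}_q^{[n]^D}: c|_\ell\in\mathcal{B}_i\ \forall i\in[D],\ \forall \ell\in\mathcal{L}_i\}$; $\mathcal{B}^{(i)}=\{c: c|_\ell\in\mathcal{B}_i\ \forall\ell\in\mathcal{L}_i\}$ and $\mathcal{B}_1\boxplus\cdots\boxplus\mathcal{B}_D=\sum_i\mathcal{B}^{(i)}$. For $\ell\in\mathcal{L}_i$ let $\mathcal{B}_\ell=\{c\in\mathbb{F}_q^{[n]^D}:\operatorname{supp}c\subseteq\ell,\ c|_\ell\in\mathcal{B}_i\}$. For $M\subseteq[n]^D$, $L(M)=\{\ell\in\mathcal{L}:\ell\subseteq M\}$.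 $M$ is inner-generated for $\mathcal{B}_1\boxplus\cdots\boxplus\mathcal{B}_D$ if every codeword $c$ of this code with $\operatorname{supp}c\subseteq M$ lies in $\sum_{\ell\in L(M)}\mathcal{B}_\ell$. $M$ is extendable for $\mathcal{B}_1\otimes\cdots\otimes\mathcal{B}_D$ if every $c_M\in\mathbb{F}_q^M$ with $c_M|_\ell\in\mathcal{B}_i$ for all $i\in[D]$ and $\ell\in L(M)\cap\mathcal{L}_i$ extends to some $c\in\mathcal{B}_1\otimes\cdots\otimes\mathcal{B}_D$ with $c|_M=c_M$. $\mathcal{C}^\perp$ is the dual code. *)

From HB Require Import structures.
From mathcomp Require Import all_boot all_order all_algebra.
Set Implicit Arguments. Unset Strict Implicit. Unset Printing Implicit Defensive.
Import GRing.Theory.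
Local Open Scope ring_scope.

(* Points of [n]^D : functions 'I_D -> 'I_n (coordinates 0-based). *)
Definition point (n D : nat) := {ffun 'I_D -> 'I_n}.

Definition word (F : fieldType) (n D : nat) := {ffun point n D -> F}.

Definition code (F : fieldType) (n : nat) := 'rV[F]_n -> Prop.

Definition upd (n D : nat) (p : point n D) (i : 'I_D) (k : 'I_n) : point n D :=
  [ffun j => if j == i then k else p j].

(* The line through p parallel to the i-th axis.  Every line of L_i is
   line i p for some p (p's i-th coordinate is irrelevant). *)
Definition line (n D : nat) (i : 'I_D) (p : point n D) : {set point n D} :=
  [set upd p i k | k : 'I_n].

Definition restr (F : fieldType) (n D : nat) (c : word F n D) (i : 'I_D)
  (p : point n D) : 'rV[F]_n := \row_k c (upd p i k).

Definition supp_sub (F : fieldType) (n D : nat) (c : word F n D)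
  (S : {set point n D}) : Prop := forall x, c x != 0 -> x \in S.

Definition dir_code (F : fieldType) (n D : nat) (B : 'I_D -> code F n)
  (i : 'I_D) (c : word F n D) : Prop := forall p, B i (restr c i p).

Definition prod_code (F : fieldType) (n D : nat) (B : 'I_D -> code F n)
  (c : word F n D) : Prop := forall i, dir_code B i c.

Definition boxplus_code (F : fieldType) (n D : nat) (B : 'I_D -> code F n)
  (c : word F n D) : Prop :=
  exists f : 'I_D -> word F n D,
    (forall i, dir_code B i (f i)) /\ c = \sum_(i < D) f i.

Definition line_code (F : fieldType) (n D : nat) (B : 'I_D -> code F n)
  (i : 'I_D) (p : point n D) (c : word F n D) : Prop :=
  supp_sub c (line i p) /\ B i (restr c i p).

(* M is inner-generated for B_1 ⊞ ... ⊞ B_D: every codeword supported in M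
   lies in sum_{ℓ ∈ L(M)} B_ℓ.  Lines are indexed by pairs (i, p);
   repetitions do not change a sum of subspaces. *)
Definition inner_generated (F : fieldType) (n D : nat) (B : 'I_D -> code F n)
  (M : {set point n D}) : Prop :=
  forall c : word F n D, boxplus_code B c -> supp_sub c M ->
    exists g : 'I_D -> point n D -> word F n D,
      (forall i p, line i p \subset M -> line_code B i p (g i p)) /\
      c = \sum_(i < D) \sum_(p | line i p \subset M) g i p.

(* M is extendable for B_1 ⊗ ... ⊗ B_D.  An element c_M of F^M is
   represented by a word whose values outside M are ignored. *)
Definition extendable (F : fieldType) (n D : nat) (B : 'I_D -> code F n)
  (M : {set point n D}) : Prop :=
  forall cM : word F n D,
    (forall i p, line i p \subset M -> B i (restr cM i p)) ->
    exists c : word F n D, prod_code B c /\ (forall x, x \in M -> c x = cM x).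

Definition dual_code (F : fieldType) (n : nat) (C : {vspace 'rV[F]_n}) : code F n :=
  fun x => forall c, c \in C -> \sum_(k < n) x 0 k * c 0 k = 0.

Definition as_code (F : fieldType) (n : nat) (C : {vspace 'rV[F]_n}) : code F n :=
  fun x => x \in C.

(* Write W for the sum code C_1 ⊞ ... ⊞ C_D and P for C_1^⊥ ⊗ ... ⊗ C_D^⊥,
   and S_M for the span of the line codes C_ℓ, ℓ ⊆ M.  For the standard dot
   product on words, W^⊥ = P, and the words orthogonal to S_M are exactly those
   satisfying the line conditions in the definition of extendability.  In
   finite dimension every subspace is its own double annihilator.  Hence:
   - if M is inner-generated, a word y orthogonal to the restrictions of P to M
     is supported on M and lies in P^⊥ = W, hence in S_M, hence is orthogonal
     to every c_M satisfying the line conditions, so c_M is such a restriction;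
   - if M is extendable, a word y orthogonal to S_M agrees on M with some z in P,
     and z is orthogonal to every codeword of W supported on M, so such a
     codeword lies in S_M. *)

From mathcomp Require Import all_boot all_order all_algebra.
From Stdlib Require Import ClassicalEpsilon.
Set Implicit Arguments. Unset Strict Implicit. Unset Printing Implicit Defensive.
Import GRing.Theory.
Local Open Scope ring_scope.

Section Orthogonality.
Variables (F : fieldType) (T : finType).
Implicit Types (S : {ffun T -> F} -> Prop) (u v w y : {ffun T -> F}).

Definition dotf u v := \sum_x u x * v x.

Definition annihilator S y := forall s, S s -> dotf y s = 0.

Record subspace S : Prop := Subspace {
  subspace0 : S 0;
  subspace_lin : forall a u v, S u -> S v -> S [ffun x => a * u x + v x] }.

Lemma dotfC u v : dotf u v = dotf v u.
Proof. by apply: eq_bigr => x _; rewrite mulrC. Qed.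

Lemma dotf_sumr u (I : Type) (r : seq I) (P : pred I) (G : I -> {ffun T -> F}) :
  dotf u (\sum_(j <- r | P j) G j) = \sum_(j <- r | P j) dotf u (G j).
Proof.
apply: (big_morph (dotf u)) => [v w|]; last by apply: big1 => x _; rewrite ffunE mulr0.
by rewrite -big_split; apply: eq_bigr => x _; rewrite ffunE mulrDr.
Qed.

Lemma dotf_delta u x0 : dotf u [ffun x => (x == x0)%:R] = u x0.
Proof.
rewrite /dotf (bigD1 x0) //= big1 => [|x /negbTE x_ne]; rewrite ffunE ?x_ne ?mulr0 //.
by rewrite eqxx mulr1 addr0.
Qed.

Lemma eq_dotf_on (A : {pred T}) u u' v :
  (forall x, v x != 0 -> x \in A) -> {in A, u =1 u'} -> dotf u v = dotf u' v.
Proof.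
move=> suppv eq_uu'; apply: eq_bigr => x _.
by have [->|/suppv/eq_uu' ->] := eqVneq (v x) 0; rewrite ?mulr0.
Qed.

End Orthogonality.

Section DoubleAnnihilator.
Variables (F : finFieldType) (T : finType).
Implicit Types (S : {ffun T -> F} -> Prop) (w : {ffun T -> F}).

Definition vecf w : 'rV[F]_#|T| := \row_j w (enum_val j).

Definition unvecf (r : 'rV[F]_#|T|) : {ffun T -> F} := [ffun x => r 0 (enum_rank x)].

Lemma vecfK : cancel vecf unvecf.
Proof. by move=> w; apply/ffunP => x; rewrite ffunE mxE enum_rankK. Qed.

Lemma unvecf0 : unvecf 0 = 0.
Proof. by apply/ffunP => x; rewrite !ffunE mxE. Qed.

Lemma unvecf_lin a r r' : unvecf (a *: r + r') = [ffun x => a * unvecf r x + unvecf r' x].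
Proof. by apply/ffunP => x; rewrite !ffunE !mxE. Qed.

Lemma dotf_unvecf_col (c : 'cV[F]_#|T|) w : dotf (unvecf c^T) w = (vecf w *m c) 0 0.
Proof.
rewrite /dotf mxE (reindex _ (onW_bij _ (enum_val_bij T))) /=.
by apply: eq_bigr => j _; rewrite /unvecf ffunE !mxE enum_valK mulrC.
Qed.

Lemma subspace_rowspace S k (U : 'M_(k, #|T|)) : subspace S ->
  (forall i, S (unvecf (row i U))) -> forall w, (vecf w <= U)%MS -> S w.
Proof.
move=> [S0 Slin] SU w /submxP [a /(congr1 unvecf)]; rewrite vecfK => ->.
rewrite mulmx_sum_row; apply: (big_ind (fun r => S (unvecf r))) => [|r r' Sr Sr'|i _].
- by rewrite unvecf0.
- by rewrite -[r]scale1r unvecf_lin; apply: Slin.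
- by rewrite -[_ *: _]addr0 unvecf_lin; apply: Slin; rewrite ?unvecf0 //; apply: SU.
Qed.

Definition enum_mx S : 'M[F]_(#|{: {ffun T -> F}}|, #|T|) :=
  \matrix_k (if excluded_middle_informative (S (enum_val k)) then vecf (enum_val k) else 0).

Lemma enum_mxP S w : subspace S -> S w <-> (vecf w <= enum_mx S)%MS.
Proof.
move=> subS; split=> [Sw|]; last first.
  apply: subspace_rowspace => // k; rewrite rowK.
  case: (excluded_middle_informative (S (enum_val k))) => [Sk|_] /=; first by rewrite vecfK.
  by rewrite unvecf0; apply: subspace0.
have <- : row (enum_rank w) (enum_mx S) = vecf w.
  by rewrite rowK enum_rankK; case: (excluded_middle_informative (S w)).
exact: row_sub.
Qed.

Lemma annihilatorK S : subspace S -> forall v, annihilator (annihilator S) v -> S v.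
Proof.
move=> subS v vSS; apply/(enum_mxP v subS); rewrite submxE; apply/eqP/rowP => j.
(* The columns of [cokermx] cut out the row space of [enum_mx S], which is S. *)
pose y := unvecf (col j (cokermx (enum_mx S)))^T.
have dot_y w : dotf y w = (vecf w *m cokermx (enum_mx S)) 0 j.
  by rewrite dotf_unvecf_col colE mulmxA -colE mxE.
rewrite -dot_y mxE dotfC; apply: vSS => s /(enum_mxP s subS).
by rewrite dot_y submxE => /eqP ->; rewrite mxE.
Qed.

End DoubleAnnihilator.

Section Lines.
Variables (F : fieldType) (n D : nat).
Implicit Types (p x : point n D) (i : 'I_D) (k : 'I_n) (r : 'rV[F]_n) (u v : word F n D).

Lemma upd_id p i k : upd p i k i = k.
Proof. by rewrite ffunE eqxx. Qed.

Lemma upd_upd p i k k' : upd (upd p i k) i k' = upd p i k'.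
Proof. by apply/ffunP=> j; rewrite !ffunE; case: eqP. Qed.

Lemma upd_self p i : upd p i (p i) = p.
Proof. by apply/ffunP=> j; rewrite !ffunE; case: eqP => // ->. Qed.

Lemma upd_inj p i : injective (upd p i).
Proof. by move=> k1 k2 E; rewrite -(upd_id p i k1) E upd_id. Qed.

Lemma line_self i p : p \in line i p.
Proof. by apply/imsetP; exists (p i); rewrite ?upd_self. Qed.

Lemma line_upd i p k : line i (upd p i k) = line i p.
Proof.
by apply/setP => y; apply/imsetP/imsetP => -[k' _ ->]; exists k'; rewrite ?upd_upd.
Qed.

Lemma line_eqE i x p : (line i x == line i p) = (x \in line i p).
Proof.
apply/eqP/idP => [<-|/imsetP [k _ ->]]; [exact: line_self | exact: line_upd].
Qed.

Lemma sum_line (G : point n D -> F) i p :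
  \sum_(x in line i p) G x = \sum_k G (upd p i k).
Proof. by rewrite big_imset //= => k1 k2 _ _; apply: upd_inj. Qed.

Lemma dotf_restr_line u v i p : supp_sub v (line i p) ->
  dotf u v = \sum_k restr u i p 0 k * restr v i p 0 k.
Proof.
move=> suppv; rewrite /dotf (bigID (mem (line i p))) /= [X in _ + X]big1 ?addr0.
  by rewrite sum_line; apply: eq_bigr => k _; rewrite !mxE.
by move=> x x_out; rewrite (eqP (contraR (suppv x) x_out)) mulr0.
Qed.

Definition line_word i p r : word F n D :=
  [ffun x => if x \in line i p then r 0 (x i) else 0].

Lemma line_word_supp i p r : supp_sub (line_word i p r) (line i p).
Proof. by move=> x; rewrite ffunE; case: ifP => // _; rewrite eqxx. Qed.

Lemma restr_line_word i p r p' :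
  restr (line_word i p r) i p' = if line i p' == line i p then r else 0.
Proof.
apply/rowP => k; rewrite !mxE ffunE -line_eqE line_upd upd_id.
by case: ifP; rewrite ?mxE.
Qed.

Lemma dotf_line_word u i p r :
  dotf u (line_word i p r) = \sum_k restr u i p 0 k * r 0 k.
Proof. by rewrite (dotf_restr_line _ (@line_word_supp i p r)) restr_line_word eqxx. Qed.

Lemma restr0 i p : restr (0 : word F n D) i p = 0.
Proof. by apply/rowP=> k; rewrite !mxE ffunE. Qed.

Lemma restr_lin a u v i p :
  restr [ffun x => a * u x + v x] i p = a *: restr u i p + restr v i p.
Proof. by apply/rowP=> k; rewrite !mxE !ffunE. Qed.

Lemma supp_sub_lin a u v (A : {set point n D}) :
  supp_sub u A -> supp_sub v A -> supp_sub [ffun x => a * u x + v x] A.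
Proof.
move=> su sv x; rewrite ffunE; apply: contraR => x_out.
by rewrite (eqP (contraR (su x) x_out)) (eqP (contraR (sv x) x_out)) mulr0 addr0.
Qed.

Lemma dotf_dir_dual (Ci : {vspace 'rV[F]_n}) u v i :
  (forall p, dual_code Ci (restr u i p)) -> (forall p, restr v i p \in Ci) ->
  dotf u v = 0.
Proof.
move=> u_dual v_code.
rewrite /dotf (partition_big (fun x => line i x) (mem [set line i x | x : point n D])) /=;
  last by move=> x _; apply: imset_f.
apply: big1 => _ /imsetP [p _ ->].
under eq_bigl do rewrite line_eqE.
by rewrite sum_line -[RHS](u_dual p _ (v_code p)); apply: eq_bigr => k _; rewrite !mxE.
Qed.

Lemma dual_code_lin (Ci : {vspace 'rV[F]_n}) a r r' :
  dual_code Ci r -> dual_code Ci r' -> dual_code Ci (a *: r + r').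
Proof.
move=> dr dr' c c_in.
have -> : \sum_k (a *: r + r') 0 k * c 0 k =
    a * (\sum_k r 0 k * c 0 k) + \sum_k r' 0 k * c 0 k.
  by rewrite mulr_sumr -big_split; apply: eq_bigr => k _; rewrite !mxE mulrDl mulrA.
by rewrite dr // dr' // mulr0 addr0.
Qed.

End Lines.

(* The sum of the line codes inside M, and the words agreeing on M with a
   codeword: [inner_generated] and [extendable] unfold to inclusions into these. *)
Definition inner_span (F : fieldType) (n D : nat) (B : 'I_D -> code F n)
  (M : {set point n D}) (c : word F n D) : Prop :=
  exists g : 'I_D -> point n D -> word F n D,
    (forall i p, line i p \subset M -> line_code B i p (g i p)) /\
    c = \sum_(i < D) \sum_(p | line i p \subset M) g i p.

Definition punctured (F : fieldType) (n D : nat) (B : 'I_D -> code F n)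
  (M : {set point n D}) (w : word F n D) : Prop :=
  exists c : word F n D, prod_code B c /\ (forall x, x \in M -> c x = w x).

Section ProductDuality.
Variables (F : fieldType) (n D : nat) (C : 'I_D -> {vspace 'rV[F]_n}).
Implicit Types (p x : point n D) (i : 'I_D) (r : 'rV[F]_n) (c u v w y z : word F n D).

Local Notation codes := (fun i => as_code (C i)).
Local Notation duals := (fun i => dual_code (C i)).

Lemma dir_code0 i : dir_code codes i 0.
Proof. by move=> p; rewrite restr0; apply: mem0v. Qed.

Lemma dir_code_line_word i p r : r \in C i -> dir_code codes i (line_word i p r).
Proof. by move=> r_in p'; rewrite restr_line_word; case: ifP => // _; apply: mem0v. Qed.

Lemma boxplus_dir i u : dir_code codes i u -> boxplus_code codes u.
Proof.
move=> u_dir; exists (fun j => if j == i then u else 0); split.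
  by move=> j; case: eqP => [->|_] //; apply: dir_code0.
by rewrite (bigD1 i) //= eqxx big1 ?addr0 // => j /negbTE ->.
Qed.

Lemma boxplus_subspace : subspace (boxplus_code codes).
Proof.
split; first by exists (fun=> 0); split; [apply: dir_code0 | rewrite big1].
move=> a u v [f [f_dir ->]] [g [g_dir ->]].
exists (fun i => [ffun x => a * f i x + g i x]); split.
  by move=> i p; rewrite restr_lin; apply: memvD; [apply: memvZ; apply: f_dir | apply: g_dir].
apply/ffunP => x; rewrite !ffunE !sum_ffunE mulr_sumr -big_split.
by apply: eq_bigr => i _; rewrite ffunE.
Qed.

Lemma prod_dual0 : prod_code duals 0.
Proof. by move=> i p c _; rewrite restr0 big1 // => k _; rewrite mxE mul0r. Qed.

Lemma prod_dual_lin a u v :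
  prod_code duals u -> prod_code duals v -> prod_code duals [ffun x => a * u x + v x].
Proof.
by move=> Pu Pv i p; rewrite restr_lin; apply: dual_code_lin; [apply: Pu | apply: Pv].
Qed.

Lemma prod_dual_orth z c : prod_code duals z -> boxplus_code codes c -> dotf z c = 0.
Proof.
move=> Pz [f [f_dir ->]]; rewrite dotf_sumr big1 // => i _.
exact: dotf_dir_dual (Pz i) (f_dir i).
Qed.

Lemma annihilator_boxplus y : annihilator (boxplus_code codes) y -> prod_code duals y.
Proof.
move=> y_orth i p r r_in; rewrite -dotf_line_word.
exact/y_orth/boxplus_dir/dir_code_line_word.
Qed.

Variable M : {set point n D}.

Lemma line_code0 i p : line_code codes i p 0.
Proof. by split; [move=> x; rewrite ffunE eqxx | rewrite restr0; apply: mem0v]. Qed.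

Lemma inner_span_subspace : subspace (inner_span codes M).
Proof.
split.
  exists (fun _ _ => 0); split=> [i p _|]; first exact: line_code0.
  by rewrite big1 // => i _; rewrite big1.
move=> a u v [g [g_line ->]] [h [h_line ->]].
exists (fun i p => [ffun x => a * g i p x + h i p x]); split.
  move=> i p lineM; case: (g_line i p lineM) (h_line i p lineM) => [sg rg] [sh rh].
  by split; [apply: supp_sub_lin | rewrite restr_lin; apply: memvD; rewrite ?memvZ].
apply/ffunP => x; rewrite !ffunE !sum_ffunE mulr_sumr -big_split.
apply: eq_bigr => i _; rewrite !sum_ffunE mulr_sumr -big_split.
by apply: eq_bigr => p _; rewrite ffunE.
Qed.

Lemma inner_span_line i p u :
  line i p \subset M -> line_code codes i p u -> inner_span codes M u.
Proof.
move=> lineM u_line; exists (fun j q => if (j == i) && (q == p) then u else 0); split.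
  by move=> j q _; case: andP => [[/eqP -> /eqP ->] | _] //; apply: line_code0.
rewrite (bigD1 i) //= [X in _ + X]big1 => [|j /negbTE j_ne]; last by rewrite big1 // j_ne.
by rewrite (bigD1 p lineM) /= !eqxx big1 ?addr0 // => q /andP [_ /negbTE ->]; rewrite andbF.
Qed.

Lemma annihilator_inner_spanP w :
  annihilator (inner_span codes M) w <->
  forall i p, line i p \subset M -> dual_code (C i) (restr w i p).
Proof.
split=> [w_orth i p lineM r r_in | w_dual s [g [g_line ->]]].
  rewrite -dotf_line_word; apply: w_orth; apply: inner_span_line lineM _.
  by split; [apply: line_word_supp | rewrite restr_line_word eqxx].
rewrite dotf_sumr big1 // => i _; rewrite dotf_sumr big1 // => p lineM.
have [g_supp g_code] := g_line i p lineM.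
by rewrite (dotf_restr_line _ g_supp); apply: w_dual.
Qed.

Lemma punctured_subspace : subspace (punctured duals M).
Proof.
split; first by exists 0; split=> //; apply: prod_dual0.
move=> a u v [cu [Pu Eu]] [cv [Pv Ev]].
exists [ffun x => a * cu x + cv x]; split; first exact: prod_dual_lin.
by move=> x xM; rewrite !ffunE Eu ?Ev.
Qed.

Lemma annihilator_punctured_supp y : annihilator (punctured duals M) y -> supp_sub y M.
Proof.
move=> y_orth x; apply: contraR => x_out; rewrite -dotf_delta; apply/eqP/y_orth.
exists 0; split=> [|x' x'M]; first exact: prod_dual0.
by rewrite !ffunE; case: eqP x'M => // ->; rewrite (negbTE x_out).
Qed.

End ProductDuality.

Theorem proposition1 (F : finFieldType) (n D : nat)
  (C : 'I_D -> {vspace 'rV[F]_n}) (M : {set point n D}) :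
  inner_generated (fun i => as_code (C i)) M <->
  extendable (fun i => dual_code (C i)) M.
Proof.
split=> [inner cM cM_dual | ext c c_sum c_supp].
- apply: annihilatorK (punctured_subspace C M) _ _ => y y_orth.
  have y_sum : boxplus_code (fun i => as_code (C i)) y.
    apply: annihilatorK (boxplus_subspace C) _ _ => s /annihilator_boxplus Ps.
    by apply: y_orth; exists s.
  apply: (proj2 (annihilator_inner_spanP C M cM) cM_dual).
  exact: inner y_sum (annihilator_punctured_supp y_orth).
- apply: annihilatorK (inner_span_subspace C M) _ _ => y.
  move=> /annihilator_inner_spanP /ext [z [Pz z_eq]].
  by rewrite dotfC -(eq_dotf_on c_supp z_eq) (prod_dual_orth Pz c_sum).
Qed.
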